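(* Let $\mathbf H\in\mathbb R^{m\times d}$, $\mathbf y\in\mathbb R^m$, $\mathbf w_1,\ldots,\mathbf w_p\in\mathbb R^d$, and let $\psi_i\colon\mathbb R\to\mathbb R$, $i=1,\ldots,p$, be convex functions. If $\operatorname{argmin}_{t\in\mathbb R}\psi_i(t)\neq\emptyset$ for all $i=1,\ldots,p$, then $$\operatorname*{argmin}_{\mathbf x\in\mathbb R^d}\ \frac12\|\mathbf H\mathbf x-\mathbf y\|_2^2+\sum_{i=1}^p\psi_i(\mathbf w_i^T\mathbf x)\neq\emptyset .$$ *)

From mathcomp Require Import all_boot all_order all_algebra.
From mathcomp Require Import reals.
Set Implicit Arguments. Unset Strict Implicit. Unset Printing Implicit Defensive.
Import Order.TTheory GRing.Theory Num.Theory.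
Local Open Scope ring_scope.

Definition convex_fun (R : realType) (f : R -> R) : Prop :=
  forall (x y t : R), 0 <= t -> t <= 1 ->
    f (t * x + (1 - t) * y) <= t * f x + (1 - t) * f y.

Definition argmin_nonempty (T : Type) (R : realType) (f : T -> R) : Prop :=
  exists x : T, forall z : T, f x <= f z.

Definition sqnorm2 (R : realType) (m : nat) (v : 'cV[R]_m) : R :=
  \sum_(i < m) (v i 0) ^+ 2.

Definition dotc (R : realType) (d : nat) (w x : 'cV[R]_d) : R :=
  \sum_(j < d) w j 0 * x j 0.

Definition objective (R : realType) (m d p : nat) (H : 'M[R]_(m, d))
  (y : 'cV[R]_m) (w : 'I_p -> 'cV[R]_d) (psi : 'I_p -> R -> R)
  (x : 'cV[R]_d) : R :=
  2^-1 * sqnorm2 (H *m x - y) + \sum_(i < p) psi i (dotc (w i) x).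

(* Write the objective as F(x) = sum_j phi_j ((x M)_j), each phi_j convex on
   the line with a minimiser t_j; the quadratic term splits into the terms
   (s - y_i)^2 / 2.  Induct on the number of nonzero columns of M.  If a
   direction v with v M <> 0 only pushes coordinates towards sides on which the
   corresponding phi_j is constant beyond t_j, then far along v those terms are
   minimal, so they can be frozen and their columns deleted; a minimiser of the
   smaller problem, translated far along v, minimises F.  Otherwise each phi_j
   grows at least linearly, with positive slope on every non-flat side, so
   F(x) >= A + r(x M) with r positively homogeneous and positive on the nonzero
   vectors of the row space of M.  Compactness of the unit sphere of the row
   space gives r(u) >= c |u| there, so F is coercive on it, and convex functions
   being continuous, a minimiser exists. *)

From mathcomp Require Import all_boot all_order all_algebra.
From mathcomp Require Import reals ring lra.
From mathcomp Require Import classical_sets boolp topology normedtype derive.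
Import Order.TTheory GRing.Theory Num.Theory.
Import numFieldNormedType.Exports.
Set Implicit Arguments. Unset Strict Implicit. Unset Printing Implicit Defensive.
Local Open Scope ring_scope.

Section ConvexRealFunction.
Variable R : realType.
Implicit Types (f : R -> R) (t x : R).

Definition flat_right f t := forall s, t <= s -> f s <= f t.
Definition flat_left f t := forall s, s <= t -> f s <= f t.

Lemma convex_fun_cst (c : R) : convex_fun (fun=> c).
Proof. by move=> x y l _ _; rewrite -mulrDl subrKC mul1r. Qed.

Lemma convex_fun_opp f : convex_fun f -> convex_fun (fun s => f (- s)).
Proof.
move=> cf x y l l0 l1.
have -> : - (l * x + (1 - l) * y) = l * - x + (1 - l) * - y by ring.
exact: cf.
Qed.

Lemma convex_fun_secant f x u h : convex_fun f -> 0 <= h -> h <= 1 ->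
  f (x + h * u) - f x <= h * (f (x + u) - f x).
Proof.
move=> cf h0 h1; have := cf (x + u) x h h0 h1.
have -> : h * (x + u) + (1 - h) * x = x + h * u by ring.
lra.
Qed.

Lemma convex_fun_secant_opp f x u h : convex_fun f -> 0 <= h -> h <= 1 ->
  f x - f (x + h * u) <= h * (f (x - u) - f x).
Proof.
move=> cf h0 h1; have h1_gt0 : 0 < 1 + h by lra.
have l0 : 0 <= (1 + h)^-1 by rewrite invr_ge0 ltW.
have l1 : (1 + h)^-1 <= 1 by rewrite invf_le1 //; lra.
have := cf (x + h * u) (x - u) _ l0 l1.
have -> : (1 + h)^-1 * (x + h * u) + (1 - (1 + h)^-1) * (x - u) = x.
  by field; lra.
move=> /(ler_wpM2l (ltW h1_gt0)).
have -> : (1 + h) * ((1 + h)^-1 * f (x + h * u) + (1 - (1 + h)^-1) * f (x - u))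
    = f (x + h * u) + h * f (x - u) by field; lra.
lra.
Qed.

Lemma convex_fun_lipschitz_right f x h : convex_fun f -> 0 <= h -> h <= 1 ->
  `|f (x + h) - f x| <= h * (`|f (x + 1) - f x| + `|f (x - 1) - f x|).
Proof.
move=> cf h0 h1.
have := convex_fun_secant x 1 cf h0 h1.
have := convex_fun_secant_opp x 1 cf h0 h1.
rewrite mulr1 => down up.
have le_sum (a b : R) : a <= `|a| + `|b|.
  by apply: le_trans (ler_norm a) _; rewrite lerDl.
have := ler_wpM2l h0 (le_sum (f (x + 1) - f x) (f (x - 1) - f x)).
have := ler_wpM2l h0 (le_sum (f (x - 1) - f x) (f (x + 1) - f x)).
rewrite ler_norml [`|f (x - 1) - _| + _]addrC; lra.
Qed.

Lemma convex_fun_lipschitz f x s : convex_fun f -> `|s - x| <= 1 ->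
  `|f s - f x| <= `|s - x| * (`|f (x + 1) - f x| + `|f (x - 1) - f x|).
Proof.
move=> cf; have [xs|sx] := lerP x s => dist1.
  have sx0 : 0 <= s - x by rewrite subr_ge0.
  by have := convex_fun_lipschitz_right x cf sx0 dist1; rewrite subrKC.
have xs0 : 0 <= x - s by rewrite subr_ge0 ltW.
have := convex_fun_lipschitz_right (- x) (convex_fun_opp cf) xs0 dist1.
have -> : - (- x + (x - s)) = s by ring.
have -> : - (- x + 1) = x - 1 by ring.
have -> : - (- x - 1) = x + 1 by ring.
by rewrite opprK [`|f (x - 1) - _| + _]addrC.
Qed.

Lemma convex_fun_continuous f : convex_fun f -> continuous f.
Proof.
move=> cf x; set L := `|f (x + 1) - f x| + `|f (x - 1) - f x|.
have L0 : 0 <= L by rewrite addr_ge0.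
apply/cvgrPdist_le => e e0.
have d0 : 0 < Num.min 1 (e / (L + 1)).
  by rewrite lt_min ltr01 divr_gt0 //; lra.
apply/nbhs_normP; exists (Num.min 1 (e / (L + 1))) => // s /=.
rewrite lt_min distrC => /andP[s1 se].
rewrite distrC; apply: le_trans (convex_fun_lipschitz cf (ltW s1)) _.
apply: le_trans (ler_wpM2r L0 (ltW se)) _.
rewrite mulrAC ler_pdivrMr ?ler_wpM2l ?ltW //; lra.
Qed.

Lemma convex_fun_slope_le f t b s : convex_fun f -> t < b -> b <= s ->
  (s - t) * (f b - f t) <= (b - t) * (f s - f t).
Proof.
move=> cf tb bs; have st : 0 < s - t by lra.
set h := (b - t) / (s - t).
have h0 : 0 <= h by rewrite divr_ge0 //; lra.
have h1 : h <= 1 by rewrite ler_pdivrMr // mul1r; lra.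
have := convex_fun_secant t (s - t) cf h0 h1.
have -> : t + h * (s - t) = b by rewrite /h; field; lra.
rewrite subrKC => /(ler_wpM2l (ltW st)).
by have -> : (s - t) * (h * (f s - f t)) = (b - t) * (f s - f t) by rewrite /h; field; lra.
Qed.

Definition ramp (a b s : R) := a * Num.max 0 s + b * Num.max 0 (- s).

Lemma max0_ge0 (s : R) : 0 <= Num.max 0 s.
Proof. by rewrite le_max lexx. Qed.

Lemma ramp_ge0 a b s : 0 <= a -> 0 <= b -> 0 <= ramp a b s.
Proof. by move=> a0 b0; rewrite addr_ge0 // mulr_ge0 // max0_ge0. Qed.

Lemma rampZ a b l s : 0 <= l -> ramp a b (l * s) = l * ramp a b s.
Proof.
move=> l0; have maxM u : Num.max 0 (l * u) = l * Num.max 0 u.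
  by rewrite maxr_pMr // mulr0.
by rewrite /ramp -mulrN !maxM; ring.
Qed.

Lemma ramp_eq0 a b s : ramp a b s = 0 -> (0 < s -> a = 0) /\ (s < 0 -> b = 0).
Proof.
rewrite /ramp => r0; split => s0; move: r0.
  rewrite (max_r (ltW s0)) (@max_l _ _ 0 (- s)) ?oppr_le0 ?ltW // mulr0 addr0.
  by move/eqP; rewrite mulf_eq0 (gt_eqF s0) orbF => /eqP.
rewrite (max_l (ltW s0)) (@max_r _ _ 0 (- s)) ?oppr_ge0 ?ltW // mulr0 add0r.
by move/eqP; rewrite mulf_eq0 oppr_eq0 (lt_eqF s0) orbF => /eqP.
Qed.

Lemma continuous_ramp a b : continuous (ramp a b).
Proof.
have max0_cont (g : R -> R) : continuous g -> continuous (fun s => Num.max 0 (g s)).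
  by move=> gc s; exact: (continuous_max (@cst_continuous _ _ 0 s) (gc s)).
move=> s; apply: cvgD; apply: cvgM; try exact: cvg_cst.
  by apply: (max0_cont (fun x => x)) => x; exact: cvg_id.
by apply: (max0_cont (fun x => - x)) => x; exact: (cvgN cvg_id).
Qed.

Lemma convex_growth_right f t : convex_fun f -> (forall s, f t <= f s) ->
  exists a K, [/\ 0 <= a, a = 0 -> flat_right f t &
    forall s, a * Num.max 0 s <= f s - f t + K].
Proof.
move=> cf tmin; have [flat|not_flat] := pselect (flat_right f t).
  by exists 0, 0; split => // s; rewrite mul0r addr0 subr_ge0.
have [b tb fb] : exists2 b, t <= b & f t < f b.
  apply: contra_notP not_flat => no_b s ts; rewrite leNgt; apply/negP => fs.
  by apply: no_b; exists s.
have tb' : t < b by rewrite lt_neqAle tb andbT; apply: contraTneq fb => ->; rewrite ltxx.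
set a := (f b - f t) / (b - t).
have a_gt0 : 0 < a by rewrite divr_gt0 // subr_gt0.
exists a, (a * `|b|); split => [|/eqP|s]; [exact: ltW | by rewrite gt_eqF |].
have b_norm := ler_norm b; have := tmin s; have := max0_ge0 s.
have [bs|sb] := lerP b s.
  have slope : a * (s - t) <= f s - f t.
    rewrite /a mulrAC ler_pdivrMr ?subr_gt0 // mulrC [leRHS]mulrC.
    exact: convex_fun_slope_le.
  have [s0|s0] := lerP 0 s.
    have : a * t <= a * `|b| by rewrite ler_pM2l //; lra.
    lra.
  have := mulr_ge0 (ltW a_gt0) (normr_ge0 b).
  lra.
have : a * Num.max 0 s <= a * `|b|.
  by rewrite ler_pM2l // ge_max normr_ge0 /=; lra.
lra.
Qed.

Lemma convex_growth f t : convex_fun f -> (forall s, f t <= f s) ->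
  exists a b K, [/\ 0 <= a, 0 <= b, a = 0 -> flat_right f t,
    b = 0 -> flat_left f t & forall s, ramp a b s <= f s - f t + K].
Proof.
move=> cf tmin.
have [a [Ka [a0 a_flat Ha]]] := convex_growth_right cf tmin.
have tmin' s : f (- - t) <= f (- s) by rewrite opprK.
have [b [Kb [b0 b_flat Hb]]] := convex_growth_right (convex_fun_opp cf) tmin'.
rewrite opprK in Hb.
exists a, b, (Ka + Kb); split => //.
  move=> /b_flat flat s st; have := flat (- s); rewrite !opprK; apply.
  by rewrite lerN2.
have Ka0 : 0 <= Ka by have := Ha t; have := mulr_ge0 a0 (max0_ge0 t); lra.
have Kb0 : 0 <= Kb.
  by have := Hb (- t); rewrite opprK; have := mulr_ge0 b0 (max0_ge0 (- t)); lra.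
move=> s; have := Ha s; have := Hb (- s); rewrite /ramp opprK.
have [s0|s0] := leP 0 s.
  by rewrite (@max_l _ _ 0 (- s)) ?oppr_le0 // mulr0; lra.
by rewrite mulr0; lra.
Qed.

End ConvexRealFunction.

Section CoordinateSum.
Variable R : realType.
Local Open Scope classical_set_scope.

Definition coord_sum n (phi : 'I_n -> R -> R) (u : 'rV[R]_n) : R :=
  \sum_j phi j (u ord0 j).

Lemma continuous_sum (T : topologicalType) (I : finType) (g : I -> T -> R) :
  (forall i, continuous (g i)) -> continuous (fun x => \sum_i g i x).
Proof.
by move=> gc; apply: continuous_big => [|i _]; [exact: add_continuous | exact: gc].
Qed.

Lemma continuous_mulmx_coord k l (N : 'M[R]_(k, l)) j :
  continuous (fun u : 'rV[R]_k => (u *m N) ord0 j).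
Proof.
have -> : (fun u : 'rV[R]_k => (u *m N) ord0 j) = fun u => \sum_i u ord0 i * N i j.
  by apply/funext => u; rewrite mxE.
apply: continuous_sum => i u; apply: continuousM; last exact: cst_continuous.
exact: coord_continuous.
Qed.

Lemma continuous_coord_sum n (phi : 'I_n -> R -> R) :
  (forall j, continuous (phi j)) -> continuous (coord_sum phi).
Proof.
move=> phic; apply: continuous_sum => j u.
by apply: continuous_comp; [exact: coord_continuous | exact: phic].
Qed.

Lemma closed_rowspace k n (M : 'M[R]_(k, n)) :
  closed [set u : 'rV[R]_n | (u <= M)%MS].
Proof.
have -> : [set u : 'rV[R]_n | (u <= M)%MS] =
    \bigcap_(j in setT) [set u | (u *m cokermx M) ord0 j = 0].
  apply/seteqP; split => u /=; rewrite submxE.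
    by move=> /eqP uM0 j _ /=; rewrite uM0 mxE.
  by move=> uM0; apply/eqP/rowP => j; rewrite [RHS]mxE; exact: (uM0 j I).
apply: closed_bigI => j _.
by have := (continuous_closedP _).1 (@continuous_mulmx_coord _ _ (cokermx M) j) _
  (@closed_eq _ 0).
Qed.

End CoordinateSum.

Section Coercivity.
Variables (R : realType) (n : nat).
Local Open Scope classical_set_scope.
Implicit Types (U : set 'rV[R]_n) (B c : R).

Lemma closed_norm_bounded_compact U B :
  closed U -> (forall u, U u -> `|u| <= B) -> compact U.
Proof.
move=> Ucl UB; apply: (bounded_closed_compact _ Ucl).
rewrite /= /bounded_near; near=> M => u Uu /=; apply: le_trans (UB u Uu) _.
by near: M; apply: nbhs_pinfty_ge; rewrite num_real.
Unshelve. all: by end_near. Qed.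

Lemma closed_norm_le B : closed [set u : 'rV[R]_n | `|u| <= B].
Proof.
by have := (continuous_closedP _).1 (@norm_continuous _ 'rV[R]_n) _ (@closed_le _ B).
Qed.

Lemma closed_norm_eq B : closed [set u : 'rV[R]_n | `|u| = B].
Proof.
by have := (continuous_closedP _).1 (@norm_continuous _ 'rV[R]_n) _ (@closed_eq _ B).
Qed.

Lemma coercive_argmin (G : 'rV[R]_n -> R) U A c : continuous G -> closed U ->
  U 0 -> 0 < c -> (forall u, U u -> A + c * `|u| <= G u) ->
  exists2 u0, U u0 & forall u, U u -> G u0 <= G u.
Proof.
move=> Gc Ucl U0 c0 G_ge.
have := G_ge 0 U0; rewrite normr0 mulr0 addr0 => GA.
pose B := (G 0 - A) / c.
pose K := U `&` [set u | `|u| <= B].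
have K0 : K 0 by rewrite /K; split => //=; rewrite normr0 divr_ge0 ?subr_ge0 ?(ltW c0).
have Kc : compact K.
  apply: (@closed_norm_bounded_compact _ B); last by move=> u [].
  by rewrite /K; apply: closedI => //; exact: closed_norm_le.
have [u0 Ku0 u0_min] := compact_EVT_min (ex_intro _ 0 K0) Kc (continuous_subspaceT Gc).
move: Ku0; rewrite inE => -[Uu0 _]; exists u0 => // u Uu.
have [uB|Bu] := lerP `|u| B; first by apply: u0_min; rewrite inE.
apply: le_trans (u0_min 0 (mem_set K0)) _.
have := G_ge u Uu; have : G 0 - A < c * `|u| by rewrite mulrC -ltr_pdivrMr.
lra.
Qed.

Lemma homogeneous_lower_bound (r : 'rV[R]_n -> R) U : continuous r -> closed U ->
  (forall a u, 0 <= a -> U u -> U (a *: u)) ->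
  (forall a u, 0 <= a -> r (a *: u) = a * r u) ->
  (forall u, U u -> u != 0 -> 0 < r u) ->
  exists2 c, 0 < c & forall u, U u -> c * `|u| <= r u.
Proof.
move=> rc Ucl Ucone r_hom r_pos.
have r0 : r 0 = 0 by have := r_hom 0 0 (lexx 0); rewrite scale0r mul0r.
pose S := U `&` [set u | `|u| = 1].
have normalize u : U u -> u != 0 -> S (`|u|^-1 *: u).
  move=> Uu u0; split; first by apply: Ucone => //; rewrite invr_ge0.
  by rewrite /= normrZ normrV ?unitfE ?normr_eq0 // normr_id mulVf ?normr_eq0.
have Sc : compact S.
  apply: (@closed_norm_bounded_compact _ 1); last by move=> u [_ /= ->].
  by rewrite /S; apply: closedI => //; exact: closed_norm_eq.
have [[u1 Su1]|S0] := pselect (S !=set0); last first.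
  exists 1 => [//|u Uu]; have [->|u0] := eqVneq u 0.
    by rewrite r0 normr0 mulr0.
  by exfalso; apply: S0; exists (`|u|^-1 *: u); exact: normalize.
have [v Sv v_min] := compact_EVT_min (ex_intro _ u1 Su1) Sc (continuous_subspaceT rc).
move: Sv; rewrite inE => -[Uv v1]; exists (r v).
  by apply: r_pos => //; rewrite -normr_eq0 v1 oner_eq0.
move=> u Uu; have [->|u0] := eqVneq u 0; first by rewrite r0 normr0 mulr0.
have := v_min _ (mem_set (normalize u Uu u0)).
rewrite r_hom ?invr_ge0 ?normr_ge0 // => le_rv.
by rewrite -ler_pdivlMr ?normr_gt0 // mulrC.
Qed.

End Coercivity.

Section SumOfConvexFunctions.
Variables (R : realType) (d n : nat).
Implicit Types (M : 'M[R]_(d, n)) (phi : 'I_n -> R -> R) (t : 'I_n -> R).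

Definition flat_direction M phi t (v : 'rV[R]_d) :=
  [/\ v *m M != 0,
      forall j, 0 < (v *m M) ord0 j -> flat_right (phi j) (t j) &
      forall j, (v *m M) ord0 j < 0 -> flat_left (phi j) (t j)].

Lemma argmin_no_flat_direction M phi t :
  (forall j, convex_fun (phi j)) -> (forall j s, phi j (t j) <= phi j s) ->
  ~ (exists v, flat_direction M phi t v) ->
  argmin_nonempty (fun x => coord_sum phi (x *m M)).
Proof.
move=> phi_cvx phi_min no_flat.
have [a ha] := choice (fun j => convex_growth (phi_cvx j) (phi_min j)).
have [b hb] := choice ha; have [K hK] := choice hb.
pose r := coord_sum (fun j => ramp (a j) (b j)).
have ramp_j_ge0 j s : 0 <= ramp (a j) (b j) s.
  by have [a0 b0 _ _ _] := hK j; exact: ramp_ge0.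
have [c c0 r_ge] : exists2 c, 0 < c & forall u, (u <= M)%MS -> c * `|u| <= r u.
  apply: homogeneous_lower_bound.
  - by apply: continuous_coord_sum => j; exact: continuous_ramp.
  - exact: closed_rowspace.
  - by move=> l u _ uM; rewrite /= scalemx_sub.
  - move=> l u l0; rewrite /r /coord_sum mulr_sumr.
    by apply: eq_bigr => j _; rewrite mxE rampZ.
  move=> u /submxP [x ->] xM0; rewrite lt_neqAle sumr_ge0 ?andbT => [|j _]; last first.
    exact: ramp_j_ge0.
  apply/negP => /eqP/esym/(psumr_eq0P (fun j _ => ramp_j_ge0 j _)) r0.
  apply: no_flat; exists x; split => // j xj;
    have [_ _ a_flat b_flat _] := hK j; have [aj0 bj0] := ramp_eq0 (r0 j isT).
    exact: a_flat (aj0 xj).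
  exact: b_flat (bj0 xj).
have G_ge u : \sum_j (phi j (t j) - K j) + r u <= coord_sum phi u.
  rewrite /r /coord_sum -big_split; apply: ler_sum => j _.
  by have [_ _ _ _ /(_ (u ord0 j))] := hK j; rewrite /=; lra.
have phi_cont j := convex_fun_continuous (phi_cvx j).
have [u0 Mu0 u0_min] := coercive_argmin (continuous_coord_sum phi_cont)
  (@closed_rowspace R d n M) (sub0mx 1 M) c0
  (fun u Mu => le_trans (lerD (lexx _) (r_ge u Mu)) (G_ge u)).
have [x0 u0E] := submxP Mu0.
by exists x0 => x; rewrite -u0E; apply: u0_min; exact: submxMl.
Qed.

Definition drop_cols (c : 'rV[R]_n) M : 'M[R]_(d, n) :=
  \matrix_(i, j) (if c ord0 j == 0 then M i j else 0).

Definition freeze (c : 'rV[R]_n) phi t j : R -> R :=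
  if c ord0 j == 0 then phi j else fun=> phi j (t j).

Definition nz_cols M := [set j | col j M != 0].

Lemma mulmx_drop_cols c M (x : 'rV[R]_d) j : (x *m drop_cols c M) ord0 j =
  if c ord0 j == 0 then (x *m M) ord0 j else 0.
Proof.
rewrite !mxE; case: ifP => cj.
  by apply: eq_bigr => i _; rewrite mxE cj.
by apply: big1 => i _; rewrite mxE cj mulr0.
Qed.

Lemma nz_cols_drop_cols v M :
  v *m M != 0 -> nz_cols (drop_cols (v *m M) M) \proper nz_cols M.
Proof.
have colE c j : col j (drop_cols c M) = if c ord0 j == 0 then col j M else 0.
  by apply/colP => i; rewrite !mxE; case: ifP; rewrite ?mxE.
move=> vM0; rewrite /nz_cols; apply/properP; split.
  by apply/fintype.subsetP => j; rewrite !inE colE; case: ifP; rewrite ?eqxx.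
have [j vMj] : exists j, (v *m M) ord0 j != 0.
  apply/existsP; rewrite -negb_forall; apply: contra vM0 => /forallP vM0.
  by apply/eqP/rowP => j; rewrite [RHS]mxE; apply/eqP.
exists j; rewrite !inE; last by rewrite colE (negbTE vMj) eqxx.
apply: contra vMj => /eqP/colP Mj0; rewrite mxE; apply/eqP/big1 => i _.
by have := Mj0 i; rewrite !mxE => ->; rewrite mulr0.
Qed.

Lemma freeze_convex c phi t :
  (forall j, convex_fun (phi j)) -> forall j, convex_fun (freeze c phi t j).
Proof.
by move=> phi_cvx j; rewrite /freeze; case: ifP => _; [exact: phi_cvx | exact: convex_fun_cst].
Qed.

Lemma freeze_min c phi t : (forall j s, phi j (t j) <= phi j s) ->
  forall j s, freeze c phi t j (t j) <= freeze c phi t j s.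
Proof. by move=> phi_min j s; rewrite /freeze; case: ifP. Qed.

Lemma flat_direction_argmin M phi t v :
  (forall j s, phi j (t j) <= phi j s) -> flat_direction M phi t v ->
  argmin_nonempty
    (fun x => coord_sum (freeze (v *m M) phi t) (x *m drop_cols (v *m M) M)) ->
  argmin_nonempty (fun x => coord_sum phi (x *m M)).
Proof.
move=> phi_min [_ vR vL] [x0 x0_min]; set c := v *m M.
(* Far enough along [v], every coordinate with [c_j != 0] lies on the flat side
   of [phi j], where [phi j] takes its minimal value. *)
pose lam := \sum_j `|t j - (x0 *m M) ord0 j| / `|c ord0 j|.
exists (x0 + lam *: v) => z.
have -> : coord_sum phi ((x0 + lam *: v) *m M) =
    coord_sum (freeze c phi t) (x0 *m drop_cols c M).
  apply: eq_bigr => j _; rewrite mulmx_drop_cols /freeze mulmxDl -scalemxAl.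
  rewrite mxE [X in _ + X]mxE -/c.
  have [->|cj0] := eqVneq (c ord0 j) 0; first by rewrite mulr0 addr0.
  have lam_ge : `|t j - (x0 *m M) ord0 j| <= lam * `|c ord0 j|.
    rewrite -ler_pdivrMr ?normr_gt0 // /lam (bigD1 j) //= lerDl.
    by apply: sumr_ge0 => i _; rewrite divr_ge0.
  apply/le_anti; rewrite phi_min andbT.
  move: lam_ge; have [cj|cj|cj] := ltgtP (c ord0 j) 0; last by rewrite cj eqxx in cj0.
    rewrite (ltr0_norm cj) ler_norml => /andP[lam_ge _]; apply: vL => //; lra.
  rewrite (gtr0_norm cj) ler_norml => /andP[_ lam_ge]; apply: vR => //; lra.
apply: le_trans (x0_min z) _; apply: ler_sum => j _.
by rewrite mulmx_drop_cols /freeze; case: ifP.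
Qed.

Lemma argmin_sum_convex M phi t :
  (forall j, convex_fun (phi j)) -> (forall j s, phi j (t j) <= phi j s) ->
  argmin_nonempty (fun x => coord_sum phi (x *m M)).
Proof.
have [k] := ubnP #|nz_cols M|; elim: k M phi => // k IH M phi ltMk phi_cvx phi_min.
have [[v flat]|no_flat] := pselect (exists v, flat_direction M phi t v); last first.
  exact: argmin_no_flat_direction.
apply: (flat_direction_argmin phi_min flat); apply: IH.
- by case: flat => vM0 _ _; exact: leq_trans (proper_card (nz_cols_drop_cols vM0)) ltMk.
- exact: freeze_convex.
- exact: freeze_min.
Qed.

End SumOfConvexFunctions.

Lemma convex_fun_half_sqr_dist (R : realType) (c : R) :
  convex_fun (fun s => 2^-1 * (s - c) ^+ 2).
Proof.
move=> x y l l0 l1.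
have gap : l * (2^-1 * (x - c) ^+ 2) + (1 - l) * (2^-1 * (y - c) ^+ 2)
    - 2^-1 * (l * x + (1 - l) * y - c) ^+ 2 = 2^-1 * (l * (1 - l)) * (x - y) ^+ 2.
  by field.
have : 0 <= 2^-1 * (l * (1 - l)) * (x - y) ^+ 2.
  by rewrite mulr_ge0 ?sqr_ge0 // mulr_ge0 ?invr_ge0 // mulr_ge0 // subr_ge0.
rewrite -gap; lra.
Qed.

Theorem proposition1 (R : realType) (m d p : nat) (H : 'M[R]_(m, d))
  (y : 'cV[R]_m) (w : 'I_p -> 'cV[R]_d) (psi : 'I_p -> R -> R)
  (hconv : forall i : 'I_p, convex_fun (psi i))
  (hmin : forall i : 'I_p, argmin_nonempty (psi i)) :
  argmin_nonempty (objective H y w psi).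
Proof.
have [tpsi tpsi_min] := choice hmin.
pose M := row_mx H^T (\matrix_(k, i) w i k 0).
pose phi (j : 'I_(m + p)) : R -> R :=
  match split j with inl i => fun s => 2^-1 * (s - y i 0) ^+ 2 | inr i => psi i end.
pose t (j : 'I_(m + p)) : R :=
  match split j with inl i => y i 0 | inr i => tpsi i end.
have phi_cvx j : convex_fun (phi j).
  by rewrite /phi; case: split => i; [exact: convex_fun_half_sqr_dist | exact: hconv].
have phi_min j s : phi j (t j) <= phi j s.
  rewrite /phi /t; case: split => i //.
  by rewrite subrr expr0n mulr0 mulr_ge0 ?invr_ge0 ?sqr_ge0.
have objectiveE x : objective H y w psi x = coord_sum phi (x^T *m M).
  rewrite /objective /coord_sum big_split_ord /= mul_mx_row /sqnorm2 mulr_sumr.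
  congr (_ + _); apply: eq_bigr => i _; rewrite /phi.
    by rewrite (unsplitK (inl _ i)) row_mxEl -trmx_mul !mxE.
  rewrite (unsplitK (inr _ i)) row_mxEr /dotc mxE.
  by congr (psi i _); apply: eq_bigr => k _; rewrite !mxE mulrC.
have [x0 x0_min] := argmin_sum_convex M phi_cvx phi_min.
by exists x0^T => x; rewrite !objectiveE trmxK.
Qed.
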